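(* Let $G,\Gamma$ be groups, $\pi:G\to\Gamma$ a surjective morphism and $K=\ker\pi$. Let $(\tau_T)_{T>0}$ be a family of unital states on $(\mathbb{C}[K],1,* )$ such that $\tau_T(gkg^{-1})=\tau_T(k)$ for all $(g,k)\in G\times K$ and $T>0$, and such that for every $k\in K$, $$\lim_{T\to0}\tau_T(k)=1,\qquad\lim_{T\to\infty}\tau_T(k)=\tau_{reg_K}(k).$$ For $g\in G$ let $\tilde\tau_T(g)=\tau_T(g)$ if $\pi(g)=1_\Gamma$ and $0$ otherwise. Then for every $g\in G$, $$\lim_{T\to0}\tilde\tau_T(g)=\tau_{reg_\Gamma}(\pi(g)),\qquad\lim_{T\to\infty}\tilde\tau_T(g)=\tau_{reg_G}(g).$$
   Context: For a group $H$, $\mathbb{C}[H]$ is its group algebra with $h^*=h^{-1}$; a unital state is a positive, tracial, unital linear functional. The regular state $\tau_{reg_H}$ is defined by $\tau_{reg_H}(h)=1$ if $h=1_H$ and $0$ otherwise; the trivial state is $\tau_{triv_H}(h)=1$ for all $h$ (so the first limit hypothesis reads $\tau_T\to\tau_{triv_K}$ pointwise). *)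

(* abstract (possibly infinite) groups as explicit records,
   complex numbers C := R[i] over an arbitrary R : realType. *)
From HB Require Import structures.
From mathcomp Require Import all_boot all_order all_algebra.
From mathcomp Require Import boolp reals.
From mathcomp Require Import complex.
Set Implicit Arguments. Unset Strict Implicit. Unset Printing Implicit Defensive.
Import Order.TTheory GRing.Theory Num.Theory.
Local Open Scope ring_scope.
Local Open Scope complex_scope.

Record group := Group {
  gcar :> Type;
  gmul : gcar -> gcar -> gcar;
  gone : gcar;
  ginv : gcar -> gcar;
  gmulA : forall x y z, gmul x (gmul y z) = gmul (gmul x y) z;
  gmul1 : forall x, gmul gone x = x;
  gmulV : forall x, gmul (ginv x) x = gone }.

Definition is_morph (G H : group) (f : G -> H) : Prop :=
  forall x y, f (gmul x y) = gmul (f x) (f y).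

Definition surjective (A B : Type) (f : A -> B) : Prop := forall y, exists x, f x = y.

Definition in_ker (G H : group) (pi : G -> H) (g : G) : Prop := pi g = gone H.

(* A unital state on C[K] (K = ker pi) is a linear functional, hence determined
   by its values tau k on the basis elements k in K.  The conditions below are
   what positivity, traciality and unitality unfold to for the linear extension
   of tau (with k^* = k^-1). *)
Definition unital_state (R : realType) (G H : group) (pi : G -> H)
  (tau : G -> R[i]) : Prop :=
  (* positive: tau(a^* a) >= 0 for every a = sum_j c_j x_j in C[K] *)
  (forall (n : nat) (x : 'I_n -> G) (c : 'I_n -> R[i]),
      (forall j, in_ker pi (x j)) ->
      0 <= \sum_(j1 < n) \sum_(j2 < n)
             (c j1)^* * c j2 * tau (gmul (ginv (x j1)) (x j2))) /\
  (forall k1 k2, in_ker pi k1 -> in_ker pi k2 ->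
      tau (gmul k1 k2) = tau (gmul k2 k1)) /\
  tau (gone G) = 1.

Definition tau_reg (R : realType) (H : group) (h : H) : R[i] :=
  if `[< h = gone H >] then 1 else 0.

Definition tau_tilde (R : realType) (G H : group) (pi : G -> H)
  (tau : G -> R[i]) (g : G) : R[i] :=
  if `[< pi g = gone H >] then tau g else 0.

Definition lim_at_0 (R : realType) (f : R -> R[i]) (l : R[i]) : Prop :=
  forall e : R, 0 < e -> exists d : R, 0 < d /\
    forall T : R, 0 < T -> T < d -> `|f T - l| < e%:C.

Definition lim_at_oo (R : realType) (f : R -> R[i]) (l : R[i]) : Prop :=
  forall e : R, 0 < e -> exists M : R,
    forall T : R, M < T -> `|f T - l| < e%:C.

From HB Require Import structures.
From mathcomp Require Import all_boot all_order all_algebra.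
From mathcomp Require Import boolp reals.
From mathcomp Require Import complex.
Set Implicit Arguments. Unset Strict Implicit. Unset Printing Implicit Defensive.
Import Order.TTheory GRing.Theory Num.Theory.
Local Open Scope ring_scope.

(* On the kernel, [tau_tilde] is [tau] and the regular state of [Gam] at
   [pi g = 1] is 1, so both limits are the hypotheses.  Off the kernel,
   [tau_tilde] vanishes identically, while [pi g <> 1] and [g <> 1] make both
   regular states 0. *)

Lemma gmul_idem_one (G : group) (x : G) : gmul x x = x -> x = gone G.
Proof. by move=> xx; have := gmulV x; rewrite -{2}xx gmulA gmulV gmul1. Qed.

Lemma morph_one (G H : group) (f : G -> H) :
  is_morph f -> f (gone G) = gone H.
Proof. by move=> fM; apply: gmul_idem_one; rewrite -fM gmul1. Qed.

Section RegularAndTilde.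

Variable R : realType.

Lemma tau_reg_one (H : group) (h : H) : h = gone H -> tau_reg R h = 1.
Proof. by move=> h1; rewrite /tau_reg asboolT. Qed.

Lemma tau_reg_nonone (H : group) (h : H) : h <> gone H -> tau_reg R h = 0.
Proof. by move=> h1; rewrite /tau_reg asboolF. Qed.

Lemma tau_tilde_ker (G H : group) (pi : G -> H) (tau : G -> R[i]) (g : G) :
  in_ker pi g -> tau_tilde pi tau g = tau g.
Proof. by move=> kg; rewrite /tau_tilde asboolT. Qed.

Lemma tau_tilde_notker (G H : group) (pi : G -> H) (tau : G -> R[i]) (g : G) :
  ~ in_ker pi g -> tau_tilde pi tau g = 0.
Proof. by move=> kg; rewrite /tau_tilde asboolF. Qed.

Lemma lim_at_0_cst (c : R[i]) : lim_at_0 (fun=> c) c.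
Proof. by move=> e e0; exists 1; split=> // T _ _; rewrite subrr normr0 ltcR. Qed.

Lemma lim_at_oo_cst (c : R[i]) : lim_at_oo (fun=> c) c.
Proof. by move=> e e0; exists 0 => T _; rewrite subrr normr0 ltcR. Qed.

End RegularAndTilde.

Theorem lemma6p2 (R : realType) (G Gam : group) (pi : G -> Gam)
  (Hpi_morph : is_morph pi) (Hpi_surj : surjective pi)
  (tau : R -> G -> R[i])
  (Hstate : forall T : R, 0 < T -> unital_state pi (tau T))
  (Hconj : forall T : R, 0 < T -> forall g k : G, in_ker pi k ->
     tau T (gmul (gmul g k) (ginv g)) = tau T k)
  (Hlim0 : forall k : G, in_ker pi k -> lim_at_0 (fun T => tau T k) 1)
  (Hlimoo : forall k : G, in_ker pi k -> lim_at_oo (fun T => tau T k) (tau_reg R k)) :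
  forall g : G,
    lim_at_0 (fun T => tau_tilde pi (tau T) g) (tau_reg R (pi g)) /\
    lim_at_oo (fun T => tau_tilde pi (tau T) g) (tau_reg R g).
Proof.
move=> g; case: (pselect (in_ker pi g)) => kg.
  rewrite (tau_reg_one R kg).
  have -> : (fun T => tau_tilde pi (tau T) g) = (fun T => tau T g).
    by apply: funext => T; rewrite tau_tilde_ker.
  by split; [apply: Hlim0 | apply: Hlimoo].
have g_nonone : g <> gone G.
  by move=> g1; apply: kg; rewrite /in_ker g1 (morph_one Hpi_morph).
rewrite (tau_reg_nonone R kg) (tau_reg_nonone R g_nonone).
have -> : (fun T => tau_tilde pi (tau T) g) = (fun=> 0).
  by apply: funext => T; rewrite tau_tilde_notker.
by split; [apply: lim_at_0_cst | apply: lim_at_oo_cst].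
Qed.
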